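(* Let $(L,\le)$ be an infinite linearly ordered set and $\kappa:L\to\{+,-,0\}$ a coloring such that $L$ is not of type $\infty_{+,-,0}$. Then $L$ can be decomposed into finitely many intervals $L=L_1\,\dot\cup\,L_2\,\dot\cup\cdots\dot\cup\,L_m$ with $L_1\prec L_2\prec\cdots\prec L_m$ such that $|\kappa(L_i)|\le 2$ for every $i\le m$.
   Context: $L$ is of type $\infty_{+,-,0}$ if for every natural number $n$ there is a sequence $a_1<a_2<\dots<a_{3(n+1)}$ in $L$ with $\kappa(a_{3i+1})=+$, $\kappa(a_{3i+2})=-$, $\kappa(a_{3i+3})=0$ for all $i\le n$. For intervals $I,J$, $I\prec J$ means $a<b$ for all $a\in I$, $b\in J$. *)

From HB Require Import structures.
From mathcomp Require Import all_boot all_order.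
Set Implicit Arguments. Unset Strict Implicit. Unset Printing Implicit Defensive.
Import Order.TTheory.
Local Open Scope order_scope.

Inductive color := cplus | cminus | czero.

Definition color_eqb (a b : color) : bool :=
  match a, b with
  | cplus, cplus | cminus, cminus | czero, czero => true | _, _ => false end.
Lemma color_eqP : Equality.axiom color_eqb.
Proof. by move=> [] [] /=; constructor. Qed.
HB.instance Definition _ := hasDecEq.Build color color_eqP.

Section Defs.
Context {disp : Order.disp_t} {L : orderType disp}.

Definition infinite_type : Prop := ~ exists s : seq L, forall x : L, x \in s.

(* L is of type oo_{+,-,0}: for every n there is a strictly increasing
   a_0 < ... < a_{3(n+1)-1} with colours +,-,0 repeated (0-indexed). *)
Definition type_inf_pm0 (kappa : L -> color) : Prop :=
  forall n : nat, exists a : nat -> L,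
    (forall i j, (i < j)%N -> (j < 3 * n.+1)%N -> a i < a j) /\
    (forall i, (i <= n)%N ->
       [/\ kappa (a (3 * i)%N) = cplus,
           kappa (a (3 * i).+1) = cminus &
           kappa (a (3 * i).+2) = czero]).

Definition is_interval (I : L -> Prop) : Prop :=
  forall x y z : L, I x -> I z -> x <= y -> y <= z -> I y.

Definition interval_prec (I J : L -> Prop) : Prop :=
  forall a b : L, I a -> J b -> a < b.

Definition image_card_le2 (kappa : L -> color) (I : L -> Prop) : Prop :=
  exists s : seq color, (size s <= 2)%N /\ forall x, I x -> kappa x \in s.

End Defs.

From HB Require Import structures.
From mathcomp Require Import all_boot all_order.
From mathcomp Require Import zify.
From Stdlib Require Import Classical.
Set Implicit Arguments. Unset Strict Implicit. Unset Printing Implicit Defensive.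
Local Open Scope order_scope.
Import Order.TTheory.

(* If the colour word w does not occur along an increasing tuple of an
   interval S, then S splits into finitely many consecutive intervals each
   missing a colour; the theorem is the case w = (+ - 0)^(n+1).  Induction on
   w = c :: w': the points of S with no c-coloured point of S below them form
   an interval avoiding c followed by at most one point of colour c, and w'
   does not occur among the remaining points. *)

Section Decomposition.
Context {disp : Order.disp_t} {L : orderType disp} (kappa : L -> color).

Definition misses_color (I : L -> Prop) : Prop :=
  exists c, forall x, I x -> kappa x <> c.

Definition decomposition (S : L -> Prop) (m : nat) (Ls : nat -> L -> Prop) :=
  [/\ forall i, (i < m)%N -> is_interval (Ls i) /\ exists x, Ls i x,
      forall x, S x -> exists i, (i < m)%N /\ Ls i x,
      forall i x, (i < m)%N -> Ls i x -> S x,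
      forall i j, (i < j)%N -> (j < m)%N -> interval_prec (Ls i) (Ls j) &
      forall i, (i < m)%N -> misses_color (Ls i)].

Definition decomposable (S : L -> Prop) : Prop :=
  exists m Ls, decomposition S m Ls.

Lemma decomposable_eq S T :
  (forall x, S x <-> T x) -> decomposable S -> decomposable T.
Proof.
move=> ST [m [Ls [Lint Lcov Lsub Lprec Lmiss]]]; exists m, Ls; split=> //.
- by move=> x /ST /Lcov.
- by move=> i x im /(Lsub _ _ im) /ST.
Qed.

Lemma decomposable0 : decomposable (fun _ => False).
Proof. by exists 0%N, (fun _ _ => False); split. Qed.

Lemma decomposition_cons J T m Ls :
  is_interval J -> (exists x, J x) -> misses_color J -> interval_prec J T ->
  decomposition T m Ls ->
  decomposition (fun x => J x \/ T x) m.+1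
                (fun i => if i is i'.+1 then Ls i' else J).
Proof.
move=> Jint Jne Jmiss JT [Lint Lcov Lsub Lprec Lmiss]; split.
- by case=> [|i] //=; apply: Lint.
- by move=> x [Jx | /Lcov [i [im Lx]]]; [exists 0%N | exists i.+1].
- by move=> [|i] x //= im Lx; [left | right; apply: Lsub Lx].
- move=> [|i] [|j] //= ij jm; last exact: Lprec.
  by move=> a b Ja Lb; apply: JT Ja _; apply: Lsub Lb.
- by case=> [|i] //=; apply: Lmiss.
Qed.

Lemma decomposable_cons J T :
  is_interval J -> misses_color J -> interval_prec J T ->
  decomposable T -> decomposable (fun x => J x \/ T x).
Proof.
move=> Jint Jmiss JT [m [Ls dT]].
have [Jne | J0] := classic (exists x, J x).
  by exists m.+1, (fun i => if i is i'.+1 then Ls i' else J); apply: decomposition_cons.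
apply: decomposable_eq (ex_intro _ m (ex_intro _ Ls dT)) => x.
by split=> [|[Jx|//]]; [right | case: J0; exists x].
Qed.

Lemma decomposable_interval S : is_interval S -> misses_color S -> decomposable S.
Proof.
move=> Sint Smiss.
have JT : interval_prec S (fun _ => False) by move=> ? ? _ [].
apply: decomposable_eq (decomposable_cons Sint Smiss JT decomposable0).
by move=> x; split=> [[//|[]] | Sx]; left.
Qed.

Fixpoint occurs (S : L -> Prop) (w : seq color) : Prop :=
  if w is c :: w' then
    exists2 a, S a /\ kappa a = c & occurs (fun y => S y /\ a < y) w'
  else True.

Lemma occurs_sub S T w : (forall x, S x -> T x) -> occurs S w -> occurs T w.
Proof.
elim: w S T => [|c w IH] S T //= ST [a [Sa ka] occ].
by exists a; [split; [apply: ST|] | apply: IH occ => x [/ST]].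
Qed.

Lemma occurs_sorted S w : occurs S w ->
  exists s : seq L, [/\ sorted <%O s, map kappa s = w & forall x, x \in s -> S x].
Proof.
elim: w S => [|c w IH] S /=; first by exists [::].
case=> a [Sa ka] /IH [s [s_sorted s_col s_S]]; exists (a :: s); split.
- case: s s_sorted s_S {s_col} => //= b s -> s_S.
  by have [_ ->] := s_S b (mem_head b s).
- by rewrite /= ka s_col.
- by move=> x; rewrite in_cons => /orP [/eqP -> | /s_S []].
Qed.

Section CutAtColor.
Variables (S : L -> Prop) (c : color).
Hypothesis S_interval : is_interval S.

Definition colored_below x := exists a, S a /\ kappa a = c /\ a < x.
Definition past_color x := S x /\ colored_below x.
Definition upto_color x := S x /\ ~ colored_below x.

Lemma past_color_interval : is_interval past_color.
Proof.
move=> x y z [Sx [a [Sa [ka ax]]]] [Sz _] xy yz; split; first exact: S_interval Sx Sz xy yz.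
by exists a; do !split=> //; apply: lt_le_trans ax xy.
Qed.

Lemma upto_color_prec : interval_prec upto_color past_color.
Proof.
move=> x y [_ Nx] [_ [a [Sa [ka ay]]]]; rewrite ltNge; apply/negP => yx.
by apply: Nx; exists a; do !split=> //; apply: lt_le_trans ay yx.
Qed.

Lemma upto_color_down y z : upto_color z -> S y -> y <= z -> upto_color y.
Proof.
move=> [_ Nz] Sy yz; split=> // -[a [Sa [ka ay]]].
by apply: Nz; exists a; do !split=> //; apply: lt_le_trans ay yz.
Qed.

Lemma upto_color_lt x y :
  upto_color x -> S y -> kappa y = c -> kappa x <> c -> x < y.
Proof.
move=> [_ Nx] Sy ky kx; rewrite ltNge le_eqVlt negb_or; apply/andP; split.
  by apply/eqP => yx; apply: kx; rewrite -yx.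
by apply/negP => yx; apply: Nx; exists y.
Qed.

Lemma upto_colored_unique x y :
  upto_color x -> upto_color y -> kappa x = c -> kappa y = c -> x = y.
Proof.
move=> [Sx Nx] [Sy Ny] kx ky.
by case: (ltgtP x y) => // [xy | yx]; [case: Ny; exists x | case: Nx; exists y].
Qed.

Lemma occurs_past_color d w :
  occurs past_color (d :: w) -> occurs S (c :: d :: w).
Proof.
move=> [b [[Sb [a [Sa [ka ab]]]] kb] occ]; exists a => //; exists b; first by [].
apply: occurs_sub occ => y [[Sy _] by_].
by do !split=> //; apply: lt_trans ab by_.
Qed.

Lemma decomposable_cut : decomposable past_color -> decomposable S.
Proof.
move=> dpast.
have dlast : decomposable (fun x => (upto_color x /\ kappa x = c) \/ past_color x).
  apply: decomposable_cons dpast.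
  - move=> x y z [Ux kx] [Uz kz] xy yz; have zx := upto_colored_unique Uz Ux kz kx.
    by rewrite zx in yz; have -> : y = x by apply/eqP; rewrite eq_le yz xy.
  - by exists (if c is cplus then cminus else cplus) => x [_ ->]; case: c.
  - by move=> x y [Ux _]; apply: upto_color_prec.
pose J x := upto_color x /\ kappa x <> c.
have Jint : is_interval J.
  move=> x y z [Ux kx] [Uz kz] xy yz.
  have Uy := upto_color_down Uz (S_interval Ux.1 Uz.1 xy yz) yz.
  by split=> // ky; have := upto_color_lt Uz Uy.1 ky kz; rewrite ltNge yz.
have Jprec : interval_prec J (fun x => (upto_color x /\ kappa x = c) \/ past_color x).
  move=> x y [Ux kx] [[[Sy _] ky] | past_y]; first exact: upto_color_lt.
  exact: upto_color_prec.
have Jmiss : misses_color J by exists c => x [].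
apply: decomposable_eq (decomposable_cons Jint Jmiss Jprec dlast).
move=> x; split=> [[[[Sx _] _] | [[[Sx _] _] | [Sx _]]] // | Sx].
have [below | not_below] := classic (colored_below x); first by right; right.
by have [kx | kx] := classic (kappa x = c); [right; left | left].
Qed.

End CutAtColor.

Lemma decomposable_of_not_occurs c w S :
  is_interval S -> ~ occurs S (c :: w) -> decomposable S.
Proof.
elim: w c S => [|d w IH] c S Sint Socc.
  by apply: decomposable_interval Sint _; exists c => x Sx kx; apply: Socc; exists x.
apply: (decomposable_cut Sint); apply: IH (past_color_interval Sint) _.
by move/occurs_past_color/Socc.
Qed.

Definition pm0_word n : seq color :=
  mkseq (fun k => nth czero [:: cplus; cminus; czero] (k %% 3)) (3 * n.+1).

Lemma type_inf_pm0_of_occurs :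
  (forall n, occurs (fun _ => True) (pm0_word n)) -> type_inf_pm0 kappa.
Proof.
move=> occ n; have [s [s_sorted s_col _]] := occurs_sorted (occ n).
have size_s : size s = 3 * n.+1 by rewrite -(size_map kappa) s_col size_mkseq.
case: s s_sorted s_col size_s => // x0 s' s_sorted s_col size_s.
have kappa_nth k : (k < 3 * n.+1)%N ->
    kappa (nth x0 (x0 :: s') k) = nth czero [:: cplus; cminus; czero] (k %% 3).
  by move=> kn; rewrite -(nth_map x0 czero) ?size_s // s_col nth_mkseq.
exists (nth x0 (x0 :: s')); split.
  by move=> i j ij jn; rewrite lt_sorted_ltn_nth // inE size_s //; apply: ltn_trans jn.
move=> i iN; rewrite !kappa_nth; try lia.
have -> : (3 * i %% 3 = 0)%N by lia.
have -> : ((3 * i).+1 %% 3 = 1)%N by lia.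
by have -> : ((3 * i).+2 %% 3 = 2)%N by lia.
Qed.

Lemma image_card_le2_misses I : misses_color I -> image_card_le2 kappa I.
Proof.
move=> [c Ic]; exists [seq d <- [:: cplus; cminus; czero] | d != c].
by split=> [|x /Ic]; case: c {Ic} => //; case: (kappa x).
Qed.

End Decomposition.

Theorem proposition2p2 (disp : Order.disp_t) (L : orderType disp)
    (kappa : L -> color) :
  infinite_type (L := L) -> ~ type_inf_pm0 kappa ->
  exists (m : nat) (Ls : nat -> L -> Prop),
    (forall i, (i < m)%N -> is_interval (Ls i) /\ exists x, Ls i x) /\
    (forall x : L, exists i, (i < m)%N /\ Ls i x) /\
    (forall i j, (i < j)%N -> (j < m)%N -> interval_prec (Ls i) (Ls j)) /\
    (forall i, (i < m)%N -> image_card_le2 kappa (Ls i)).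
Proof.
move=> _ no_pm0.
have [n no_word] : exists n, ~ occurs kappa (fun _ => True) (pm0_word n).
  by apply: not_all_ex_not => occ; apply/no_pm0/type_inf_pm0_of_occurs.
have Tint : is_interval (fun _ : L => True) by [].
have [m [Ls [Lint Lcov _ Lprec Lmiss]]] := decomposable_of_not_occurs Tint no_word.
exists m, Ls; do !split=> //.
- by move=> x; apply: Lcov.
- by move=> i im; apply/image_card_le2_misses/Lmiss.
Qed.
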